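(* There exists a fragile triangle-free graph (i.e., of girth at least $4$) with chromatic number $4$.
   Context: All graphs are finite and simple. A graph is $k$-connected if it has at least $k+1$ vertices and no vertex cutset with at most $k-1$ vertices. A graph is fragile if it has no $3$-connected subgraph. *)

From mathcomp Require Import all_boot.
Set Implicit Arguments. Unset Strict Implicit. Unset Printing Implicit Defensive.

Definition simple_graph (T : finType) (e : rel T) : Prop :=
  symmetric e /\ irreflexive e.

Definition is_subgraph (T : finType) (e : rel T) (V : {set T}) (F : rel T) : Prop :=
  forall x y, F x y -> [/\ e x y, x \in V & y \in V].

Definition connected_minus (T : finType) (V : {set T}) (F : rel T) (X : {set T}) : Prop :=
  let W := V :\: X in
  forall x y, x \in W -> y \in W ->
    connect [rel a b | [&& F a b, a \in W & b \in W]] x y.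

Definition k_connected (k : nat) (T : finType) (V : {set T}) (F : rel T) : Prop :=
  k.+1 <= #|V| /\
  forall X : {set T}, X \subset V -> #|X| <= k.-1 -> connected_minus V F X.

Definition fragile (T : finType) (e : rel T) : Prop :=
  ~ exists (V : {set T}) (F : rel T), is_subgraph e V F /\ k_connected 3 V F.

Definition triangle_free (T : finType) (e : rel T) : Prop :=
  forall x y z, ~ [/\ e x y, e y z & e z x].

Definition colorable (T : finType) (e : rel T) (k : nat) : Prop :=
  exists f : T -> 'I_k, forall x y, e x y -> f x != f y.

Definition chromatic_number_is (T : finType) (e : rel T) (k : nat) : Prop :=
  colorable e k /\ forall j, j < k -> ~ colorable e j.

From mathcomp Require Import all_boot.
Set Implicit Arguments. Unset Strict Implicit. Unset Printing Implicit Defensive.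

(* The graph [G24] consists of two pieces on the vertices 0..11 and on 0, 2, 12..23,
   glued along the non-adjacent vertices 0 and 2, with no other edges between them.
   A 3-connected graph has at least four vertices, minimum degree at least 3, and no
   separation of order at most 2; so a 3-connected subgraph of [G24] would lie in one
   piece, where repeatedly discarding a vertex with at most two neighbours leaves at
   most three vertices.  Triangle-freeness and a 4-colouring are checked directly; an
   exhaustive search, colouring the vertices in order against their earlier neighbours,
   finds no proper 3-colouring. *)

Section ConnectedSubgraphs.

Variables (T : finType) (e : rel T).

Lemma k_connected_min_degree k V F x :
  0 < k -> irreflexive e -> is_subgraph e V F -> k_connected k V F ->
  x \in V -> k <= #|[set y in V | e x y]|.
Proof.
move=> k_gt0 irr_e subVF [cardV conV] xV; rewrite leqNgt; apply/negP => small.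
set N := [set y in V | e x y] in small.
have NV : N \subset V by apply/subsetP => y; rewrite inE => /andP[].
have cardN : #|N| <= k.-1 by rewrite -ltnS prednK.
have xN : x \notin N by rewrite inE irr_e andbF.
have /subsetPn[y yV] : ~~ (V \subset x |: N).
  apply/negP => /subset_leq_card; rewrite cardsU1 xN add1n => cardV'.
  by have := leq_trans cardV (leq_trans cardV' small); rewrite ltnn.
rewrite in_setU1 negb_or => /andP[yx yN].
have xW : x \in V :\: N by rewrite inE xN xV.
have yW : y \in V :\: N by rewrite inE yN yV.
case/connectP: (conV N NV cardN x y xW yW) => -[_ /= yx'|z p /= /andP[/and3P[Fxz _ zW] _] _].
  by rewrite yx' eqxx in yx.
have [exz _ zV] := subVF _ _ Fxz.
by move: zW; rewrite !inE zV exz.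
Qed.

Lemma k_connected_separation k V F (A B : {set T}) :
  symmetric e -> is_subgraph e V F -> k_connected k V F ->
  V \subset A :|: B -> #|A :&: B| <= k.-1 ->
  (forall u v, u \in A :\: B -> v \in B :\: A -> ~~ e u v) ->
  V \subset A \/ V \subset B.
Proof.
move=> sym_e subVF [_ conV] VAB cardAB noEdge.
have [|/subsetPn[u uV uA]] := boolP (V \subset A); first by left.
right; apply/subsetP => v vV; apply/negPn/negP => vB.
have inAB w : w \in V -> (w \in A) || (w \in B) by move/(subsetP VAB); rewrite inE.
have vA : v \in A by have := inAB v vV; rewrite (negbTE vB) orbF.
set X := V :&: (A :&: B).
set R := [rel a b | [&& F a b, a \in V :\: X & b \in V :\: X]].
have cardX : #|X| <= k.-1 := leq_trans (subset_leq_card (subsetIr _ _)) cardAB.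
have uW : u \in V :\: X by rewrite !inE (negbTE uA) uV.
have vW : v \in V :\: X by rewrite !inE (negbTE vB) vV !andbF.
have closedA : closed R A.
  move=> a b /and3P[Fab aW bW]; have [eab aV bV] := subVF _ _ Fab.
  move: aW bW; rewrite !inE aV bV !andbT.
  have := inAB a aV; have := inAB b bV.
  case aA: (a \in A); case bA: (b \in A); rewrite //= => bB aB naX nbX.
  - by move: (noEdge a b); rewrite !inE aA bA bB (negbTE naX) eab => /(_ isT isT).
  - by move: (noEdge b a); rewrite !inE aA bA aB (negbTE nbX) sym_e eab => /(_ isT isT).
have := closed_connect closedA (conV X (subsetIl _ _) cardX u v uW vW).
by rewrite vA (negbTE uA).
Qed.

End ConnectedSubgraphs.

Lemma colorable_leq (T : finType) (e : rel T) j k :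
  j <= k -> colorable e j -> colorable e k.
Proof. by move=> jk [f proper_f]; exists (widen_ord jk \o f) => x y /proper_f. Qed.

Lemma chromatic_number_isS (T : finType) (e : rel T) k :
  colorable e k.+1 -> ~ colorable e k -> chromatic_number_is e k.+1.
Proof.
by move=> col_Sk not_col_k; split=> // j jk /(colorable_leq (jk : j <= k)).
Qed.

Definition nat_graph n (adj : rel nat) : rel 'I_n := fun x y => adj x y.
Arguments nat_graph : clear implicits.

Definition all_pairs n (P : nat -> nat -> bool) : bool :=
  all (fun i => all (P i) (iota 0 n)) (iota 0 n).

Lemma all_pairsP n P (x y : 'I_n) : all_pairs n P -> P x y.
Proof.
have iota_ord (z : 'I_n) : val z \in iota 0 n by rewrite mem_iota ltn_ord.
by move=> /allP/(_ x (iota_ord x))/allP/(_ y (iota_ord y)).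
Qed.

Section NatGraph.
Variables (n : nat) (adj : rel nat).
Local Notation G := (nat_graph n adj).

Lemma nat_graph_irreflexive : all (fun i => ~~ adj i i) (iota 0 n) -> irreflexive G.
Proof.
by move=> /allP irr x; apply/negbTE/irr; rewrite mem_iota ltn_ord.
Qed.

Lemma nat_graph_triangle_free :
  all_pairs n (fun i j => adj i j ==> all (fun k => ~~ (adj j k && adj k i)) (iota 0 n)) ->
  triangle_free G.
Proof.
move=> /all_pairsP ok x y z [exy eyz ezx]; move/implyP/(_ exy)/allP/(_ z): (ok x y).
by rewrite mem_iota ltn_ord => /(_ isT); move: eyz ezx; rewrite /nat_graph => -> ->.
Qed.

Lemma nat_graph_colorable k (col : seq nat) :
  all (fun a => a <= k) col ->
  all_pairs n (fun i j => adj i j ==> (nth 0 col i != nth 0 col j)) ->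
  colorable G k.+1.
Proof.
move=> col_le /all_pairsP ok; exists (fun x : 'I_n => inord (nth 0 col x)) => x y exy.
have col_lt i : nth 0 col i < k.+1.
  by case: (ltnP i (size col)) => [/(mem_nth 0)/(allP col_le)|/(nth_default 0) ->].
by rewrite -val_eqE /= !inordK //; move/implyP: (ok x y); apply.
Qed.

End NatGraph.

Inductive fragility_cert :=
  | CertSmall
  | CertPeel of nat & fragility_cert
  | CertSplit of seq nat & seq nat & fragility_cert & fragility_cert.

Section FragilityCertificate.
Variables (n : nat) (adj : rel nat).
Local Notation G := (nat_graph n adj).
Hypotheses (G_sym : symmetric G) (G_irr : irreflexive G).

Definition in_nat_set (s : seq nat) : {set 'I_n} := [set x | val x \in s].

Lemma card_in_nat_set s : #|in_nat_set s| <= size s.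
Proof.
rewrite cardE -(size_map val); apply: uniq_leq_size.
  by rewrite map_inj_uniq ?enum_uniq //; apply: val_inj.
by move=> y /mapP[x]; rewrite mem_enum inE => xs ->.
Qed.

(* [cert_valid W c]: every 3-connected subgraph with vertices in [W] is ruled out by [c]:
   either [W] is too small, or a vertex [x] has at most two neighbours in [W] and can be
   discarded, or [W] is covered by [a] and [b] which meet in at most two vertices and have
   no edge between [a \ b] and [b \ a]. *)
Fixpoint cert_valid (W : seq nat) (c : fragility_cert) : bool :=
  match c with
  | CertSmall => size W <= 3
  | CertPeel x c' => (count (adj x) W <= 2) && cert_valid (filter (predC1 x) W) c'
  | CertSplit a b c1 c2 =>
      [&& all (fun w => (w \in a) || (w \in b)) W,
          size [seq u <- a | u \in b] <= 2,
          all (fun u => all (fun v => ~~ adj u v) [seq v <- b | v \notin a])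
              [seq u <- a | u \notin b],
          cert_valid a c1 & cert_valid b c2]
  end.

Lemma cert_valid_sound c W V F :
  cert_valid W c -> is_subgraph G V F -> k_connected 3 V F -> V \subset in_nat_set W -> False.
Proof.
elim: c W V => [|x c IHc|a b c1 IHc1 c2 IHc2] W V /= valid_c subVF conVF VW.
- have [cardV _] := conVF.
  have cardW := leq_trans (card_in_nat_set W) valid_c.
  by have := leq_trans cardV (leq_trans (subset_leq_card VW) cardW).
- case/andP: valid_c => deg_x valid_c.
  apply: (IHc _ _ valid_c subVF conVF); apply/subsetP => y yV.
  have yW : val y \in W by have := subsetP VW y yV; rewrite inE.
  rewrite inE mem_filter yW andbT /=; apply/negP => /eqP yx.
  have := k_connected_min_degree (isT : 0 < 3) G_irr subVF conVF yV.
  apply/negP; rewrite -ltnNge ltnS (leq_trans _ deg_x) // -size_filter.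
  apply: leq_trans (card_in_nat_set _); apply/subset_leq_card/subsetP => z.
  rewrite !inE mem_filter -yx => /andP[zV adj_yz].
  by apply/andP; split; [exact: adj_yz | have := subsetP VW z zV; rewrite inE].
- case/and5P: valid_c => cover overlap no_edge valid_c1 valid_c2.
  have [||u v|VA|VB] :=
    k_connected_separation (A := in_nat_set a) (B := in_nat_set b) G_sym subVF conVF.
  + apply/subsetP => y /(subsetP VW); rewrite !inE; exact: (allP cover).
  + apply: leq_trans overlap; apply: leq_trans (card_in_nat_set _).
    by apply/subset_leq_card/subsetP => y; rewrite !inE mem_filter andbC.
  + rewrite !inE => /andP[ub ua] /andP[va vb].
    by apply: (allP (allP no_edge u _) v); rewrite mem_filter ?ua ?ub ?va ?vb.
  + exact: IHc1 valid_c1 subVF conVF VA.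
  + exact: IHc2 valid_c2 subVF conVF VB.
Qed.

Lemma nat_graph_fragile c : cert_valid (iota 0 n) c -> fragile G.
Proof.
move=> valid_c [V [F [subVF conVF]]]; apply: cert_valid_sound valid_c subVF conVF _.
by apply/subsetP => x _; rewrite inE mem_iota ltn_ord.
Qed.

End FragilityCertificate.

Section ColouringSearch.
Variables (adj : rel nat) (c : nat).

Definition back_neighbours n : seq (seq nat) :=
  mkseq (fun k => [seq u <- iota 0 k | adj u k]) n.

Lemma back_neighboursP n k u : u \in nth [::] (back_neighbours n) k -> (u < k) && adj u k.
Proof.
case: (ltnP k n) => [kn|nk]; last by rewrite nth_default // size_mkseq.
by rewrite nth_mkseq // mem_filter mem_iota andbC.
Qed.

Fixpoint partial_colourings (back : seq (seq nat)) k : seq (seq nat) :=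
  if k is k'.+1 then
    flatten [seq [seq rcons s x | x <- iota 0 c &
                                  all (fun u => nth 0 s u != x) (nth [::] back k')]
            | s <- partial_colourings back k']
  else [:: [::]].

Lemma partial_colourings_complete n k (f : nat -> nat) :
  (forall i, i < k -> f i < c) ->
  (forall i j, i < k -> j < k -> adj i j -> f i != f j) ->
  map f (iota 0 k) \in partial_colourings (back_neighbours n) k.
Proof.
elim: k => [//|k IHk] f_lt f_proper.
rewrite -addn1 iotaD add0n map_cat cats1 addn1 /=.
apply/flattenP; exists [seq rcons (map f (iota 0 k)) x | x <- iota 0 c &
    all (fun u => nth 0 (map f (iota 0 k)) u != x) (nth [::] (back_neighbours n) k)].
  apply/map_f/IHk => [i ik|i j ik jk]; first exact/f_lt/ltnW.
  by apply: f_proper; apply: ltnW.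
apply/map_f.
rewrite mem_filter mem_iota add0n f_lt //= andbT.
apply/allP => u /back_neighboursP /andP[uk adj_uk].
by rewrite (nth_map 0) ?size_iota // nth_iota // f_proper // ltnW.
Qed.

Lemma nat_graph_not_colorable n :
  partial_colourings (back_neighbours n) n = [::] -> ~ colorable (nat_graph n adj) c.
Proof.
move=> no_colouring [f f_proper].
pose g i := if insub i is Some x then val (f x) else 0.
have gE (x : 'I_n) : g x = f x by rewrite /g valK.
have g_lt i : i < n -> g i < c.
  by move=> lt_in; rewrite -[i]/(val (Ordinal lt_in)) gE.
have g_proper i j : i < n -> j < n -> adj i j -> g i != g j.
  move=> lt_in lt_jn; rewrite -[i]/(val (Ordinal lt_in)) -[j]/(val (Ordinal lt_jn)) !gE.
  exact: f_proper.
by have := partial_colourings_complete n g_lt g_proper; rewrite no_colouring.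
Qed.

End ColouringSearch.

Definition edge_rel (E : seq (nat * nat)) : rel nat :=
  fun i j => ((i, j) \in E) || ((j, i) \in E).

Lemma edge_rel_sym E : symmetric (edge_rel E).
Proof. by move=> i j; rewrite /edge_rel orbC. Qed.

Definition G24_edges : seq (nat * nat) :=
  [:: (0,3); (0,6); (0,7); (0,12); (0,14); (1,3); (1,5); (1,11); (2,4); (2,9);
      (2,12); (2,14); (3,9); (3,10); (4,6); (4,7); (5,7); (5,8); (6,8); (6,9);
      (7,11); (8,10); (10,11); (12,15); (12,18); (12,19); (13,15); (13,17);
      (13,23); (14,16); (14,21); (15,21); (15,22); (16,18); (16,19); (17,19);
      (17,20); (18,20); (18,21); (19,23); (20,22); (22,23)].

Definition G24 := nat_graph 24 (edge_rel G24_edges).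

Lemma G24_sym : symmetric G24.
Proof. by move=> x y; apply: edge_rel_sym. Qed.

Lemma G24_irr : irreflexive G24.
Proof. by apply: nat_graph_irreflexive; vm_compute. Qed.

Definition G24_cert : fragility_cert :=
  CertSplit [:: 0; 1; 2; 3; 4; 5; 6; 7; 8; 9; 10; 11]
            [:: 0; 2; 12; 13; 14; 15; 16; 17; 18; 19; 20; 21; 22; 23]
    (foldr CertPeel CertSmall [:: 2; 4; 9; 6; 0; 3; 1; 5; 7])
    (foldr CertPeel CertSmall [:: 0; 2; 14; 16; 21; 18; 12; 15; 13; 17; 19]).

Lemma G24_fragile : fragile G24.
Proof. by apply: (nat_graph_fragile G24_sym G24_irr (c := G24_cert)); vm_compute. Qed.

Lemma G24_triangle_free : triangle_free G24.
Proof. by apply: nat_graph_triangle_free; vm_compute. Qed.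

Definition G24_colouring : seq nat :=
  [:: 0; 0; 0; 1; 1; 1; 2; 2; 0; 3; 2; 1; 1; 0; 1; 2; 0; 1; 2; 2; 0; 0; 1; 3].

Lemma G24_colorable4 : colorable G24 4.
Proof. by apply: (nat_graph_colorable (col := G24_colouring)); vm_compute. Qed.

Lemma G24_not_colorable3 : ~ colorable G24 3.
Proof. by apply: nat_graph_not_colorable; vm_compute. Qed.

Theorem mainTheorem6 :
  exists (T : finType) (e : rel T),
    [/\ simple_graph e, fragile e, triangle_free e & chromatic_number_is e 4].
Proof.
exists 'I_24, G24; split.
- exact: (conj G24_sym G24_irr).
- exact: G24_fragile.
- exact: G24_triangle_free.
- exact: chromatic_number_isS G24_colorable4 G24_not_colorable3.
Qed.
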